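(* Let $\mathcal{X}\subset\mathbb{R}^n$ be closed and convex, $\Xi\subset\mathbb{R}^m$ closed and convex, $\beta\in(0,1)$, $\varphi:\mathcal{X}\times\mathcal{X}\times\Xi\to\mathbb{R}$ bounded and continuous, and $\mathcal{Y}:\mathcal{X}\times\Xi\rightrightarrows\mathcal{X}$ nonempty-valued, compact-valued and continuous. Let $\xi_1,\ldots,\xi_N\in\Xi$ and $\mu_N=\frac1N\sum_{i=1}^N\xi_i$. Let $\mathcal{P}$ be a set of probability distributions on $\Xi$ such that $\mathbb{E}_Q[\boldsymbol{\xi}]=\mu_N$ for every $Q\in\mathcal{P}$ and the point mass $\delta_{\mu_N}\in\mathcal{P}$. If the MPC Bellman operator $B_{\mathrm{M}}$ is convexity preserving, then the DOO functional equation $$v_{\mathrm{O}}(x,\xi)=\inf_{y\in\mathcal{Y}(x,\xi)}\Bigl\{\varphi(x,y,\xi)+\beta\inf_{Q\in\mathcal{P}}\mathbb{E}_Q[v_{\mathrm{O}}(y,\boldsymbol{\xi})]\Bigr\}\quad\forall(x,\xi)\in\mathcal{X}\times\Xi$$ has a solution which is the same as the (unique bounded continuous) solution $v_{\mathrm{M}}$ of the MPC functional equation $$v_{\mathrm{M}}(x,\xi)=\inf_{y\in\mathcal{Y}(x,\xi)}\bigl\{\varphi(x,y,\xi)+\beta v_{\mathrm{M}}(y,\mu_N)\bigr\}\quad\forall(x,\xi)\in\mathcal{X}\times\Xi.$$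
   Context: $C_b(\mathcal{X}\times\Xi)$ denotes the Banach space of bounded continuous real-valued functions on $\mathcal{X}\times\Xi$ with the sup norm. The MPC Bellman operator $B_{\mathrm{M}}:C_b(\mathcal{X}\times\Xi)\to C_b(\mathcal{X}\times\Xi)$ is $B_{\mathrm{M}}(f)(x,\xi)=\inf_{y\in\mathcal{Y}(x,\xi)}\{\varphi(x,y,\xi)+\beta f(y,\mu_N)\}$. $B_{\mathrm{M}}$ is called convexity preserving if there exists a closed subset $\mathcal{F}\subset C_b(\mathcal{X}\times\Xi)$ such that $\xi\mapsto f(x,\xi)$ is convex for every $x\in\mathcal{X}$ and $f\in\mathcal{F}$, and $B_{\mathrm{M}}(\mathcal{F})\subset\mathcal{F}$. *)

From mathcomp Require Import all_boot all_order all_algebra.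
From mathcomp Require Import all_classical all_reals all_analysis.
Import Order.TTheory GRing.Theory Num.Theory.
Import numFieldNormedType.Exports.

Set Implicit Arguments.
Unset Strict Implicit.
Unset Printing Implicit Defensive.

Local Open Scope classical_set_scope.
Local Open Scope ring_scope.

Definition BorelV (R : realType) (k : nat) :=
  g_sigma_algebraType (@open 'rV[R]_k).

Definition convex_setV (R : realType) (k : nat) (A : set 'rV[R]_k) : Prop :=
  forall a b (t : R), A a -> A b -> 0 <= t <= 1 -> A (t *: a + (1 - t) *: b).

Definition convex_fun_on (R : realType) (k : nat) (A : set 'rV[R]_k)
    (g : 'rV[R]_k -> R) : Prop :=
  forall a b (t : R), A a -> A b -> 0 <= t <= 1 ->
    g (t *: a + (1 - t) *: b) <= t * g a + (1 - t) * g b.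

Definition bcont_on (R : realType) (n m : nat) (X : set 'rV[R]_n)
    (Xi : set 'rV[R]_m) (f : 'rV[R]_n -> 'rV[R]_m -> R) : Prop :=
  (exists M : R, forall x xi, X x -> Xi xi -> `|f x xi| <= M) /\
  {within X `*` Xi, continuous (fun p : 'rV[R]_n * 'rV[R]_m => f p.1 p.2)}.

Definition sup_cvg_on (R : realType) (n m : nat) (X : set 'rV[R]_n)
    (Xi : set 'rV[R]_m) (f_ : nat -> 'rV[R]_n -> 'rV[R]_m -> R)
    (g : 'rV[R]_n -> 'rV[R]_m -> R) : Prop :=
  forall e : R, 0 < e -> exists K : nat, forall k : nat, (K <= k)%N ->
    forall x xi, X x -> Xi xi -> `|f_ k x xi - g x xi| <= e.

(* a set F of (representatives of) elements of C_b(X x Xi) is closed in the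
   sup-norm topology (sequential closedness in the metric space C_b) *)
Definition closed_in_Cb (R : realType) (n m : nat) (X : set 'rV[R]_n)
    (Xi : set 'rV[R]_m) (F : set ('rV[R]_n -> 'rV[R]_m -> R)) : Prop :=
  forall (f_ : nat -> 'rV[R]_n -> 'rV[R]_m -> R) g,
    (forall k, F (f_ k)) -> bcont_on X Xi g -> sup_cvg_on X Xi f_ g -> F g.

Definition B_M (R : realType) (n m : nat)
    (phi : 'rV[R]_n -> 'rV[R]_n -> 'rV[R]_m -> R) (beta : R)
    (Y : 'rV[R]_n -> 'rV[R]_m -> set 'rV[R]_n) (mu : 'rV[R]_m)
    (f : 'rV[R]_n -> 'rV[R]_m -> R) : 'rV[R]_n -> 'rV[R]_m -> R :=
  fun x xi => inf [set phi x y xi + beta * f y mu | y in Y x xi].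

Definition convexity_preserving (R : realType) (n m : nat)
    (X : set 'rV[R]_n) (Xi : set 'rV[R]_m)
    (phi : 'rV[R]_n -> 'rV[R]_n -> 'rV[R]_m -> R) (beta : R)
    (Y : 'rV[R]_n -> 'rV[R]_m -> set 'rV[R]_n) (mu : 'rV[R]_m) : Prop :=
  exists F : set ('rV[R]_n -> 'rV[R]_m -> R),
    (exists f, F f) /\
    (forall f, F f -> bcont_on X Xi f) /\
    closed_in_Cb X Xi F /\
    (forall f x, F f -> X x -> convex_fun_on Xi (f x)) /\
    (forall f, F f -> F (B_M phi beta Y mu f)).

Definition MPC_solution (R : realType) (n m : nat)
    (X : set 'rV[R]_n) (Xi : set 'rV[R]_m)
    (phi : 'rV[R]_n -> 'rV[R]_n -> 'rV[R]_m -> R) (beta : R)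
    (Y : 'rV[R]_n -> 'rV[R]_m -> set 'rV[R]_n) (mu : 'rV[R]_m)
    (v : 'rV[R]_n -> 'rV[R]_m -> R) : Prop :=
  forall x xi, X x -> Xi xi ->
    v x xi = inf [set phi x y xi + beta * v y mu | y in Y x xi].

(* DOO functional equation; E_Q[v(y, xi)] is the integral over Xi
   (Q is concentrated on Xi) *)
Definition DOO_solution (R : realType) (n m : nat)
    (X : set 'rV[R]_n) (Xi : set 'rV[R]_m)
    (phi : 'rV[R]_n -> 'rV[R]_n -> 'rV[R]_m -> R) (beta : R)
    (Y : 'rV[R]_n -> 'rV[R]_m -> set 'rV[R]_n)
    (P : set (probability (BorelV R m) R))
    (v : 'rV[R]_n -> 'rV[R]_m -> R) : Prop :=
  forall x xi, X x -> Xi xi ->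
    v x xi = inf [set phi x y xi +
                      beta * inf [set Rintegral Q Xi (v y) | Q in P]
                 | y in Y x xi].

From mathcomp Require Import all_boot all_order all_algebra.
From mathcomp Require Import all_classical all_reals all_analysis.
From mathcomp Require Import ring lra.
Import Order.TTheory GRing.Theory Num.Theory.
Import numFieldNormedType.Exports.

(* Convexity preservation provides a closed, B_M-stable class F of bounded
   continuous functions that are convex in xi.  Since B_M is a beta-contraction
   for the sup norm, value iteration started in F converges uniformly; its
   limit v lies in F and is the unique bounded continuous solution of the MPC
   equation.  For y in X, the function xi |-> v(y, xi) is bounded, continuous
   and convex, so Jensen's inequality gives E_Q[v(y, xi)] >= v(y, mu_N) for
   every Q in P, with equality at the point mass at mu_N: the inner infimum of
   the DOO equation is v(y, mu_N), hence v also solves the DOO equation.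
   Jensen's inequality on a closed convex subset of R^m follows from affine
   minorants: projecting (mu, G mu - eps) onto the epigraph of G yields an
   affine function below G which is eps-close to G at mu. *)

Set Implicit Arguments.
Unset Strict Implicit.
Unset Printing Implicit Defensive.

Local Open Scope classical_set_scope.
Local Open Scope ring_scope.

Lemma inf_image_le_addr (R : realType) (T : Type) (S : set T) (a b : T -> R) (c : R) :
  S !=set0 -> (exists l, forall y, S y -> l <= a y) ->
  (forall y, S y -> a y <= b y + c) -> inf (a @` S) <= inf (b @` S) + c.
Proof.
move=> [y0 Sy0] [l hl] hab.
rewrite -lerBlDr; apply: lb_le_inf; first by exists (b y0), y0.
move=> _ [y Sy <-]; rewrite lerBlDr; apply: le_trans (hab y Sy).
apply: ge_inf; last by exists y.
by exists l => _ [z Sz <-]; exact: hl.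
Qed.

Lemma inf_image_attained (R : realType) (T : Type) (S : set T) (f : T -> R) (t0 : T) :
  S t0 -> (forall t, S t -> f t0 <= f t) -> inf (f @` S) = f t0.
Proof.
move=> St0 hmin; apply/eqP; rewrite eq_le; apply/andP; split.
  apply: ge_inf; last by exists t0.
  by exists (f t0) => _ [t St <-]; exact: hmin.
apply: lb_le_inf; first by exists (f t0), t0.
by move=> _ [t St <-]; exact: hmin.
Qed.

Lemma geometric_lt_eventually (R : realType) (beta c e : R) :
  0 <= beta < 1 -> 0 <= c -> 0 < e ->
  exists K, forall k, (K <= k)%N -> beta ^+ k * c < e.
Proof.
move=> /andP[b0 b1] c0 e0.
have c1 : 0 < c + 1 by rewrite ltr_wpDl.
have := @cvg_expr R beta; rewrite ger0_norm // => /(_ b1).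
move=> /cvgr0Pnorm_lt /(_ _ (divr_gt0 e0 c1)) [K _ HK]; exists K => k Kk.
have bk0 : 0 <= beta ^+ k by rewrite exprn_ge0.
apply: (@le_lt_trans _ _ (beta ^+ k * (c + 1))); first by rewrite ler_wpM2l ?lerDl.
by rewrite -ltr_pdivlMr //; have := HK k Kk; rewrite /= ger0_norm.
Qed.

Lemma le0_geometric (R : realType) (beta x c : R) : 0 <= beta < 1 ->
  (forall k, x <= beta ^+ k * c) -> x <= 0.
Proof.
move=> hb hx; rewrite leNgt; apply/negP => x0.
have c0 : 0 <= c by have := hx 0%N; rewrite expr0 mul1r => /(lt_le_trans x0)/ltW.
have [K HK] := geometric_lt_eventually hb c0 x0.
by have := lt_le_trans (HK K (leqnn K)) (hx K); rewrite ltxx.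
Qed.

Lemma geometric_cauchy_limit (R : realType) (T : Type) (S : set T)
    (f_ : nat -> T -> R) (beta c0 : R) : 0 <= beta < 1 -> 0 <= c0 ->
  (forall k p, S p -> `|f_ k.+1 p - f_ k p| <= beta ^+ k * c0) ->
  exists (g : T -> R) (c : R), 0 <= c /\
    forall k p, S p -> `|f_ k p - g p| <= beta ^+ k * c.
Proof.
move=> /andP[b0 b1] c00 hstep.
have b1' : 0 < 1 - beta by rewrite subr_gt0.
set c := c0 / (1 - beta).
have c_ge0 : 0 <= c by rewrite /c divr_ge0 // ltW.
(* [c] is the tail sum [c0 (1 + beta + beta^2 + ...)], so each step telescopes. *)
have telescope i : beta ^+ i * c0 = beta ^+ i * c - beta ^+ i.+1 * c.
  have -> : c0 = c - beta * c.
    by rewrite -{1}(mul1r c) -mulrBl /c mulrC divfK // lt0r_neq0.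
  by rewrite exprS; ring.
pose up p k := f_ k p + beta ^+ k * c.
pose lo p k := f_ k p - beta ^+ k * c.
exists (fun p => inf (range (up p))), c; split => // k p Sp.
have up_dec : {homo up p : i j / (i <= j)%N >-> j <= i}.
  apply/nonincreasing_seqP => i; rewrite /up.
  have := hstep i p Sp; rewrite ler_norml telescope => /andP[_ h]; lra.
have lo_inc : {homo lo p : i j / (i <= j)%N >-> i <= j}.
  apply/nondecreasing_seqP => i; rewrite /lo.
  have := hstep i p Sp; rewrite ler_norml telescope => /andP[h _]; lra.
have lo_le_up i : lo p i <= up p i.
  by have := mulr_ge0 (exprn_ge0 i b0) c_ge0; rewrite /lo /up; lra.
rewrite distrC ler_distl; apply/andP; split.
  apply: lb_le_inf; first by exists (up p 0%N), 0%N.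
  move=> _ [l _ <-].
  apply: le_trans (lo_inc _ _ (leq_maxl k l)) _.
  exact: le_trans (lo_le_up _) (up_dec _ _ (leq_maxr k l)).
apply: ge_inf; last by exists k.
by exists (lo p 0%N) => _ [i _ <-]; exact: le_trans (lo_inc _ _ (leq0n i)) (lo_le_up i).
Qed.

Lemma continuous_within_ballP (R : realType) (T : pseudoMetricType R) (A : set T)
    (f : T -> R) :
  {within A, continuous f} <->
  (forall p, A p -> forall e, 0 < e -> exists2 d, 0 < d &
     forall q, A q -> ball p d q -> `|f p - f q| < e).
Proof.
rewrite subspace_continuousP; split.
  move=> hc p Ap e e0.
  have /cvgrPdist_lt /(_ e e0) := hc p Ap.
  rewrite /within /= => /nbhs_ballP [d d0 hd]; exists d => // q Aq pq.
  exact: hd.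
move=> hc p Ap; apply/cvgrPdist_lt => e e0.
have [d d0 hd] := hc p Ap e e0.
by rewrite /within /=; apply/nbhs_ballP; exists d => // q pq Aq; exact: hd.
Qed.

Lemma continuous_within_slice (R : realType) (n m : nat) (X : set 'rV[R]_n)
    (Xi : set 'rV[R]_m) (f : 'rV[R]_n -> 'rV[R]_m -> R) (y : 'rV[R]_n) : X y ->
  {within X `*` Xi, continuous (fun p : 'rV[R]_n * 'rV[R]_m => f p.1 p.2)} ->
  {within Xi, continuous (f y)}.
Proof.
move=> Xy /continuous_within_ballP hc; apply/continuous_within_ballP => p Xip e e0.
have [d d0 hd] := hc (y, p) (conj Xy Xip) e e0.
exists d => // q Xiq pq.
exact: (hd (y, q) (conj Xy Xiq) (conj (ballxx _ d0) pq)).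
Qed.

Section UniformLimit.
Variables (R : realType) (n m : nat) (X : set 'rV[R]_n) (Xi : set 'rV[R]_m).

Lemma sup_cvg_on_geometric (f_ : nat -> 'rV[R]_n -> 'rV[R]_m -> R) g (beta c : R) :
  0 <= beta < 1 -> 0 <= c ->
  (forall k x xi, X x -> Xi xi -> `|f_ k x xi - g x xi| <= beta ^+ k * c) ->
  sup_cvg_on X Xi f_ g.
Proof.
move=> hb c0 hfg e e0; have [K HK] := geometric_lt_eventually hb c0 e0.
exists K => k Kk x xi Xx Xxi.
exact: le_trans (hfg k x xi Xx Xxi) (ltW (HK k Kk)).
Qed.

Lemma bcont_on_sup_cvg (f_ : nat -> 'rV[R]_n -> 'rV[R]_m -> R) g :
  (forall k, bcont_on X Xi (f_ k)) -> sup_cvg_on X Xi f_ g -> bcont_on X Xi g.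
Proof.
move=> fb fg; split.
  have [K HK] := fg 1 ltr01; have [[M hM] _] := fb K.
  exists (M + 1) => x xi Xx Xxi.
  rewrite -[g x xi](subrKC (f_ K x xi)).
  apply: le_trans (ler_normD _ _) _; apply: lerD; first exact: hM.
  by rewrite distrC; exact: HK.
apply/continuous_within_ballP => p [Xp1 Xp2] e e0.
have e3 : 0 < e / 3 by rewrite divr_gt0.
have [K HK] := fg _ e3.
have [_ /continuous_within_ballP cK] := fb K.
have [d d0 hd] := cK p (conj Xp1 Xp2) _ e3.
exists d => // q [Xq1 Xq2] pq.
have hp := HK K (leqnn K) _ _ Xp1 Xp2.
have hq := HK K (leqnn K) _ _ Xq1 Xq2.
have hpq := hd q (conj Xq1 Xq2) pq; rewrite /= in hpq.
have -> : g p.1 p.2 - g q.1 q.2 = - (f_ K p.1 p.2 - g p.1 p.2)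
    + (f_ K p.1 p.2 - f_ K q.1 q.2) + (f_ K q.1 q.2 - g q.1 q.2) by ring.
apply: le_lt_trans (ler_normD _ _) _.
rewrite -[e](@divfK _ 3) // [_ * 3]mulr_natr mulrSr mulr2n.
apply: ltr_leD (hq); apply: le_lt_trans (ler_normD _ _) _.
by rewrite normrN; apply: ler_ltD.
Qed.

End UniformLimit.

Section Bellman.
Variables (R : realType) (n m : nat) (X : set 'rV[R]_n) (Xi : set 'rV[R]_m).
Variables (phi : 'rV[R]_n -> 'rV[R]_n -> 'rV[R]_m -> R) (beta : R).
Variables (Y : 'rV[R]_n -> 'rV[R]_m -> set 'rV[R]_n) (mu : 'rV[R]_m).
Hypothesis Ximu : Xi mu.
Hypothesis beta_ge0 : 0 <= beta.
Hypothesis phi_bounded :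
  exists M, forall x y xi, X x -> X y -> Xi xi -> `|phi x y xi| <= M.
Hypothesis Y_sub : forall x xi, X x -> Xi xi -> Y x xi `<=` X.
Hypothesis Y_neq0 : forall x xi, X x -> Xi xi -> Y x xi !=set0.

Local Notation BM := (B_M phi beta Y mu).

Lemma B_M_contraction f g (D : R) : bcont_on X Xi f -> bcont_on X Xi g ->
  (forall y xi, X y -> Xi xi -> `|f y xi - g y xi| <= D) ->
  forall x xi, X x -> Xi xi -> `|BM f x xi - BM g x xi| <= beta * D.
Proof.
move=> [[Mf hf] _] [[Mg hg] _] hfg x xi Xx Xxi.
have [Mp hp] := phi_bounded.
have lb h Mh : (forall y, X y -> `|h y mu| <= Mh) ->
    exists l, forall y, Y x xi y -> l <= phi x y xi + beta * h y mu.
  move=> hh; exists (- Mp - beta * Mh) => y /(Y_sub Xx Xxi) Xy.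
  apply: lerD; first by have := hp x y xi Xx Xy Xxi; rewrite ler_norml => /andP[].
  by rewrite -mulrN ler_wpM2l //; have := hh y Xy; rewrite ler_norml => /andP[].
have step h1 h2 : (forall y, X y -> h1 y mu - h2 y mu <= D) ->
    forall y, Y x xi y -> phi x y xi + beta * h1 y mu
                          <= phi x y xi + beta * h2 y mu + beta * D.
  move=> h12 y /(Y_sub Xx Xxi) Xy.
  by rewrite -addrA lerD2l -mulrDr ler_wpM2l // -lerBlDl h12.
rewrite /B_M ler_distl; apply/andP; split.
  rewrite lerBlDr; apply: (inf_image_le_addr (Y_neq0 Xx Xxi)).
    by apply: (lb g Mg) => y Xy; exact: hg.
  apply: step => y Xy; apply: le_trans (ler_norm _) _.
  by rewrite distrC hfg.
apply: (inf_image_le_addr (Y_neq0 Xx Xxi)).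
  by apply: (lb f Mf) => y Xy; exact: hf.
by apply: step => y Xy; apply: le_trans (ler_norm _) _; rewrite hfg.
Qed.

Hypothesis beta_lt1 : beta < 1.

Let beta01 : 0 <= beta < 1. Proof. by rewrite beta_ge0 beta_lt1. Qed.

Lemma MPC_solution_unique w v : bcont_on X Xi w -> bcont_on X Xi v ->
  MPC_solution X Xi phi beta Y mu w -> MPC_solution X Xi phi beta Y mu v ->
  forall x xi, X x -> Xi xi -> w x xi = v x xi.
Proof.
move=> wb vb sw sv.
have [[Mw hw] _] := wb; have [[Mv hv] _] := vb.
have dist_le k x xi : X x -> Xi xi -> `|w x xi - v x xi| <= beta ^+ k * (Mw + Mv).
  elim: k x xi => [|k IH] x xi Xx Xxi.
    by rewrite expr0 mul1r; apply: le_trans (ler_normB _ _) _; rewrite lerD ?hw ?hv.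
  rewrite (sw x xi Xx Xxi) (sv x xi Xx Xxi) exprS -mulrA.
  exact: B_M_contraction.
move=> x xi Xx Xxi; apply/eqP; rewrite -subr_eq0 -normr_le0.
exact: le0_geometric beta01 (fun k => dist_le k x xi Xx Xxi).
Qed.

Section ValueIteration.
Variable F : set ('rV[R]_n -> 'rV[R]_m -> R).
Hypothesis F_bcont : forall f, F f -> bcont_on X Xi f.
Hypothesis F_closed : closed_in_Cb X Xi F.
Hypothesis F_stable : forall f, F f -> F (BM f).
Variables (f0 : 'rV[R]_n -> 'rV[R]_m -> R) (Ff0 : F f0).

Let iterate k := iter k BM f0.

Let F_iterate k : F (iterate k).
Proof. by elim: k => [|k IH] //=; exact: F_stable. Qed.

Lemma value_iteration_cauchy : exists c0, 0 <= c0 /\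
  forall k x xi, X x -> Xi xi ->
    `|iterate k.+1 x xi - iterate k x xi| <= beta ^+ k * c0.
Proof.
have [[M0 h0] _] := F_bcont (F_iterate 0).
have [[M1 h1] _] := F_bcont (F_iterate 1).
exists (`|M0| + `|M1|); split; first by rewrite addr_ge0.
elim=> [|k IH] x xi Xx Xxi.
  rewrite expr0 mul1r; apply: le_trans (ler_normB _ _) _.
  by rewrite addrC lerD // (le_trans _ (ler_norm _)) ?h0 ?h1.
rewrite exprS -mulrA.
exact: B_M_contraction (F_bcont (F_iterate k.+1)) (F_bcont (F_iterate k)) IH _ _ Xx Xxi.
Qed.

Lemma MPC_solution_exists_in : exists g, F g /\ MPC_solution X Xi phi beta Y mu g.
Proof.
have [c0 [c00 hstep]] := value_iteration_cauchy.
have [G [c [c_ge0 hG]]] := geometric_cauchy_limit (S := X `*` Xi)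
  (f_ := fun k p => iterate k p.1 p.2) beta01 c00 (fun k p Sp => hstep k _ _ Sp.1 Sp.2).
pose g x xi := G (x, xi).
have hg k x xi : X x -> Xi xi -> `|iterate k x xi - g x xi| <= beta ^+ k * c.
  by move=> Xx Xxi; exact: (hG k (x, xi)).
have g_cvg := sup_cvg_on_geometric beta01 c_ge0 hg.
have gb : bcont_on X Xi g.
  by apply: bcont_on_sup_cvg g_cvg => k; exact: F_bcont.
exists g; split; first exact: F_closed F_iterate gb g_cvg.
move=> x xi Xx Xxi; apply/eqP; rewrite -subr_eq0 -normr_le0.
(* Both [g] and [BM g] are [O(beta ^+ k)]-close to [iterate k.+1 = BM (iterate k)]. *)
apply: (le0_geometric (c := c + c) beta01) => k.
have hBM := B_M_contraction (F_bcont (F_iterate k)) gb (hg k) Xx Xxi.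
have -> : g x xi - BM g x xi =
    (iterate k.+1 x xi - BM g x xi) - (iterate k.+1 x xi - g x xi) by ring.
apply: le_trans (ler_normB _ _) _.
have bk : beta ^+ k.+1 * c <= beta ^+ k * c.
  by rewrite ler_wpM2r // exprS ler_piMl ?exprn_ge0 // ltW.
rewrite mulrDr lerD //; last exact: le_trans (hg _ _ _ Xx Xxi) bk.
by apply: le_trans hBM _; rewrite mulrA -exprS.
Qed.

End ValueIteration.
End Bellman.

Section BorelV.
Variables (R : realType) (m : nat).

Lemma measurable_BorelV_open (U : set 'rV[R]_m) :
  open U -> measurable (U : set (BorelV R m)).
Proof. by move=> oU; apply: sub_sigma_algebra. Qed.

Lemma measurable_BorelV_closed (U : set 'rV[R]_m) :
  closed U -> measurable (U : set (BorelV R m)).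
Proof.
move=> cU; rewrite -[U]setCK; apply: measurableC.
by apply: measurable_BorelV_open; exact: closed_openC.
Qed.

Lemma measurable_fun_BorelV_continuous (D : set 'rV[R]_m) (f : 'rV[R]_m -> R) :
  measurable (D : set (BorelV R m)) -> {within D, continuous f} ->
  measurable_fun (D : set (BorelV R m)) f.
Proof.
move=> mD /continuousP cf.
apply: (measurability _ (measurable_realfun.RGenOpens.measurableE R)).
move=> _ [_ [a [b ->] <-]].
have := cf _ (@interval_open R (BRight a) (BLeft b) erefl erefl).
move=> /open_subspaceP [V oV VD]; rewrite /= setIC.
have -> : f @^-1` `]a, b[%classic `&` D = V `&` D by rewrite -VD.
by apply: measurableI => //; exact: sub_sigma_algebra.
Qed.

Lemma dirac_support (Xi : set 'rV[R]_m) (mu : 'rV[R]_m)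
    (Q : probability (BorelV R m) R) :
  closed Xi -> Q (Xi : set (BorelV R m)) = 1%E ->
  (forall A : set (BorelV R m), measurable A -> Q A = \d_(mu : BorelV R m) A) ->
  Xi mu.
Proof.
move=> cXi QXi hQ; have := hQ _ (measurable_BorelV_closed cXi).
rewrite QXi diracE; case: (boolP (mu \in Xi)) => [/set_mem //|_] /= [/eqP].
by rewrite oner_eq0.
Qed.

Lemma Rintegral_dirac_continuous (Q : probability (BorelV R m) R)
    (D : set 'rV[R]_m) (mu : 'rV[R]_m) (f : 'rV[R]_m -> R) :
  closed D -> D mu ->
  (forall A : set (BorelV R m), measurable A -> Q A = \d_(mu : BorelV R m) A) ->
  {within D, continuous f} -> Rintegral Q D f = f mu.
Proof.
move=> cD Dmu hQ cf; have mD := measurable_BorelV_closed cD.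
rewrite /Rintegral (eq_measure_integral (\d_(mu : BorelV R m))); last first.
  by move=> A mA _; exact: hQ.
rewrite integral_dirac //; last first.
  by apply/measurable_realfun.measurable_EFinP; exact: measurable_fun_BorelV_continuous.
by rewrite diracE mem_set //= mul1r.
Qed.

End BorelV.

Section Rintegral_sum.
Context d (T : measurableType d) (R : realType) (mu : {measure set T -> \bar R}).
Variables (D : set T) (I : Type) (f : I -> T -> R).
Hypothesis mD : measurable D.
Hypothesis f_int : forall i, mu.-integrable D (EFin \o f i).

Lemma integrable_sum_EFin (s : seq I) :
  mu.-integrable D (EFin \o (fun x => \sum_(i <- s) f i x)).
Proof.
apply: (eq_integrable mD (fun x => \sum_(i <- s) (f i x)%:E)).
  by move=> x _; rewrite /= sumEFin.
by apply: integrable_sum => // i _; exact: f_int.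
Qed.

Lemma Rintegral_sum (s : seq I) :
  \int[mu]_(x in D) (\sum_(i <- s) f i x) = \sum_(i <- s) \int[mu]_(x in D) f i x.
Proof.
rewrite /Rintegral; under eq_integral do rewrite -sumEFin.
by rewrite integral_sum // -sum_fine // => i _; apply: integrable_fin_num => //; exact: f_int.
Qed.

End Rintegral_sum.

Lemma Rintegral_full_measure d (T : measurableType d) (R : realType)
    (Q : probability T R) (D : set T) (f : T -> R) :
  measurable D -> Q D = 1%E -> Q.-integrable setT (EFin \o f) ->
  \int[Q]_x f x = \int[Q]_(x in D) f x.
Proof.
move=> mD QD fint; have mDC := measurableC mD.
have QDC : Q (~` D) = 0%E by rewrite probability_setC // QD subee.
rewrite -(setUv D) Rintegral_setU ?setUv //; last by rewrite /disj_set setICr.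
rewrite [X in _ + X](_ : _ = 0) ?addr0 // /Rintegral null_set_integral //.
by apply: (measurable_int Q); exact: integrableS fint.
Qed.

Definition affineV (R : ringType) (m : nat) (alpha : R) (a z : 'rV[R]_m) : R :=
  alpha + \sum_(j < m) a ord0 j * z ord0 j.

Definition has_mean (R : realType) (m : nat) (Q : probability (BorelV R m) R)
    (mu : 'rV[R]_m) : Prop :=
  forall j : 'I_m,
    Q.-integrable setT (fun z : BorelV R m => (z ord0 j)%:E) /\
    Rintegral Q setT (fun z : BorelV R m => z ord0 j) = mu ord0 j.

Section AffineIntegral.
Variables (R : realType) (m : nat) (Q : probability (BorelV R m) R) (mu : 'rV[R]_m).
Hypothesis Q_mean : has_mean Q mu.
Variables (alpha : R) (a : 'rV[R]_m).

Let coord_int j : Q.-integrable setT (EFin \o (fun z : BorelV R m => a ord0 j * z ord0 j)).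
Proof.
apply: (eq_integrable _ (fun z : BorelV R m => ((a ord0 j)%:E * (z ord0 j)%:E)%E)) => //.
exact/integrableZl/(Q_mean j).1.
Qed.

Lemma integrable_affineV : Q.-integrable setT (EFin \o affineV alpha a).
Proof.
apply: (eq_integrable _ (fun z : BorelV R m => (alpha%:E + (\sum_(j < m) a ord0 j * z ord0 j)%:E)%E)) => //.
apply: integrableD => //; first exact: finite_measure_integrable_cst.
exact: integrable_sum_EFin.
Qed.

Lemma Rintegral_affineV : \int[Q]_z affineV alpha a z = affineV alpha a mu.
Proof.
rewrite /affineV RintegralD //; last 2 first.
- exact: finite_measure_integrable_cst.
- exact: integrable_sum_EFin.
rewrite Rintegral_cst // (_ : fine _ = 1); last exact: (congr1 fine (probability_setT Q)).
rewrite mulr1 Rintegral_sum //; congr (_ + _).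
by apply: eq_bigr => j _; rewrite RintegralZl //; [rewrite (Q_mean j).2 | exact: (Q_mean j).1].
Qed.

End AffineIntegral.

Lemma ge0_of_perturbation (R : realFieldType) (A B : R) :
  (forall l, 0 < l <= 1 -> 0 <= 2 * A + l * B) -> 0 <= A.
Proof.
move=> h; rewrite leNgt; apply/negP => A_lt0.
have [B_le0|B_gt0] := leP B 0.
  by have := h 1; rewrite ltr01 lexx mul1r => /(_ isT); lra.
pose l := Num.min 1 (- A / B).
have l_gt0 : 0 < l by rewrite lt_min ltr01 /= divr_gt0 // oppr_gt0.
have l_le1 : l <= 1 by rewrite ge_min lexx.
have lB : l * B <= - A by rewrite -ler_pdivlMr // ge_min lexx orbT.
by have := h l; rewrite l_gt0 l_le1 => /(_ isT); lra.
Qed.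

Lemma sum_sqrD_scale (R : comRingType) (m : nat) (a d : 'I_m -> R) (l : R) :
  \sum_(j < m) (a j + l * d j) ^+ 2 = \sum_(j < m) a j ^+ 2
    + 2 * l * \sum_(j < m) a j * d j + l ^+ 2 * \sum_(j < m) d j ^+ 2.
Proof.
rewrite mulr_sumr [X in _ + X]mulr_sumr -!big_split /=.
by apply: eq_bigr => j _; ring.
Qed.

Section AffineMinorant.
Variables (R : realType) (m : nat) (Xi : set 'rV[R]_m) (G : 'rV[R]_m -> R).
Variables (mu : 'rV[R]_m) (eps : R).
Hypothesis Xi_closed : closed Xi.
Hypothesis Xi_convex : convex_setV Xi.
Hypothesis G_convex : convex_fun_on Xi G.
Hypothesis G_cont : {within Xi, continuous G}.
Hypothesis Ximu : Xi mu.
Hypothesis eps_gt0 : 0 < eps.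

Let s := G mu - eps.
Let sqdist (z : 'rV[R]_m) := \sum_(j < m) (z ord0 j - mu ord0 j) ^+ 2.
(* Squared distance from [(mu, s)] to the nearest point of the epigraph of [G]
   lying above [z]; a minimiser gives the projection of [(mu, s)] onto the
   epigraph. *)
Let epi_sqdist z := sqdist z + Num.max (G z - s) 0 ^+ 2.

Let sqdist_mu : sqdist mu = 0.
Proof. by rewrite /sqdist big1 // => j _; rewrite subrr expr0n. Qed.

Let epi_sqdist_mu : epi_sqdist mu = eps ^+ 2.
Proof.
by rewrite /epi_sqdist sqdist_mu add0r /s opprB addrCA subrr addr0 max_l // ltW.
Qed.

Let sqdist_continuous : continuous sqdist.
Proof.
have dist_j j : continuous (fun z : 'rV[R]_m => z ord0 j - mu ord0 j).
  by move=> z; apply: continuousB; [exact: coord_continuous | exact: cst_continuous].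
apply: (continuous_big add_continuous) => j _ z.
exact: continuousM (dist_j j z) (dist_j j z).
Qed.

Let epi_sqdist_continuous : {within Xi, continuous epi_sqdist}.
Proof.
have cP : {within Xi, continuous (fun z => Num.max (G z - s) 0)}.
  move=> z; apply: (@continuous_max _ _ (fun z : subspace Xi => G z - s) (fun=> 0)).
    by apply: (@continuousB _ _ _ (from_subspace Xi G) (fun=> s));
      [exact: G_cont | exact: cst_continuous].
  exact: cst_continuous.
move=> z; apply: (@continuousD _ _ _ (from_subspace Xi sqdist)
  (from_subspace Xi (fun z => Num.max (G z - s) 0 ^+ 2))).
  exact: (continuous_subspaceT sqdist_continuous).
exact: (@continuous_comp _ _ _ (from_subspace Xi (fun z => Num.max (G z - s) 0))
  (fun x : R => x ^+ 2) z (cP z) (@exprn_continuous R 2 _)).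
Qed.

Let compact_sublevel : compact (Xi `&` [set z | sqdist z <= eps ^+ 2]).
Proof.
apply: bounded_closed_compact; last first.
  apply: closedI => //.
  exact: (proj1 (continuous_closedP sqdist) sqdist_continuous _ (@closed_le R (eps ^+ 2))).
exists (eps + \sum_(j < m) `|mu ord0 j|); split; first exact: num_real.
move=> M hM z [_ hz]; apply/ltW/(le_lt_trans _ hM).
rewrite (_ : `|z| = mx_norm z) // mx_normrE; apply: bigmax_le => [|[i j] _ /=].
  by rewrite addr_ge0 ?sumr_ge0 // ltW.
rewrite (_ : i = ord0); last by apply/val_inj; case: i => -[].
rewrite -[z ord0 j](subrK (mu ord0 j)); apply: le_trans (ler_normD _ _) _.
apply: lerD; last by rewrite (bigD1 j) //= lerDl sumr_ge0.
rewrite -(@ler_pXn2r _ 2) ?nnegrE ?(ltW eps_gt0) //; apply: le_trans _ hz.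
rewrite real_normK ?num_real // /sqdist (bigD1 j) //= lerDl.
by apply: sumr_ge0 => k _; exact: sqr_ge0.
Qed.

Let epi_sqdist_has_min :
  exists2 q, Xi q & forall z, Xi z -> epi_sqdist q <= epi_sqdist z.
Proof.
have mu_sub : (Xi `&` [set z | sqdist z <= eps ^+ 2]) mu.
  by split => //=; rewrite sqdist_mu sqr_ge0.
have [q] := compact_EVT_min (ex_intro _ mu mu_sub) compact_sublevel
  (continuous_subspaceW (@subIsetl _ Xi _) epi_sqdist_continuous).
rewrite inE => -[Xiq _] q_min; exists q => // z Xiz.
have [zK|zK] := pselect ((Xi `&` [set z | sqdist z <= eps ^+ 2]) z).
  by apply: q_min; rewrite inE.
apply: le_trans (q_min mu _) _; first by rewrite inE.
rewrite epi_sqdist_mu; apply: (@le_trans _ _ (sqdist z)); last by rewrite lerDl sqr_ge0.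
by rewrite leNgt; apply/negP => hz; apply: zK; split => //; exact: ltW.
Qed.

Section Projection.
Variable q : 'rV[R]_m.
Hypothesis Xiq : Xi q.
Hypothesis q_min : forall z, Xi z -> epi_sqdist q <= epi_sqdist z.

(* [(q, tau)] is the projection of [(mu, s)] onto the epigraph of [G] and
   [(a, b)] the vector from [(mu, s)] to it, an outer normal of the epigraph. *)
Let a j := q ord0 j - mu ord0 j.
Let b := Num.max (G q - s) 0.
Let tau := s + b.

Let b_ge0 : 0 <= b.
Proof. by rewrite le_max lexx orbT. Qed.

Lemma epi_projection_normal xi : Xi xi ->
  0 <= \sum_(j < m) a j * (xi ord0 j - q ord0 j) + b * (G xi - tau).
Proof.
move=> Xixi; apply: (ge0_of_perturbation
  (B := \sum_(j < m) (xi ord0 j - q ord0 j) ^+ 2 + (G xi - tau) ^+ 2)).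
move=> l /andP[l_gt0 l_le1]; have l01 : 0 <= l <= 1 by rewrite ltW.
pose z := l *: xi + (1 - l) *: q.
have Xiz : Xi z := Xi_convex Xixi Xiq l01.
have sqdist_z : sqdist z = \sum_(j < m) (a j + l * (xi ord0 j - q ord0 j)) ^+ 2.
  by apply: eq_bigr => j _; rewrite /z /a !mxE; congr (_ ^+ 2); ring.
have Pz : Num.max (G z - s) 0 ^+ 2 <= (b + l * (G xi - tau)) ^+ 2.
  have Gz : G z <= l * G xi + (1 - l) * G q := G_convex Xixi Xiq l01.
  have Gq : (1 - l) * (G q - s) <= (1 - l) * b.
    by rewrite ler_wpM2l ?subr_ge0 // le_max lexx.
  have : Num.max (G z - s) 0 <= `|b + l * (G xi - tau)|.
    by rewrite ge_max normr_ge0 andbT; apply: le_trans (ler_norm _); rewrite /tau; lra.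
  move=> hP; rewrite -[X in _ <= X]real_normK ?num_real // !expr2.
  by apply: ler_pM => //; rewrite le_max lexx orbT.
have := q_min Xiz; rewrite /epi_sqdist sqdist_z sum_sqrD_scale -/b.
have -> : sqdist q = \sum_(j < m) a j ^+ 2 by [].
rewrite -(pmulr_rge0 _ l_gt0); move: Pz.
set SA := \sum_(j < m) a j ^+ 2.
set SAD := \sum_(j < m) a j * (xi ord0 j - q ord0 j).
set SD := \sum_(j < m) (xi ord0 j - q ord0 j) ^+ 2.
set T := G xi - tau.
set PZ := Num.max (G z - s) 0.
by move=> *; nra.
Qed.

Lemma epi_projection_height_gt0 : 0 < b.
Proof.
rewrite lt_def b_ge0 andbT; apply/negP => /eqP b0.
have := epi_projection_normal Ximu; rewrite b0 mul0r addr0.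
have -> : \sum_(j < m) a j * (mu ord0 j - q ord0 j) = - \sum_(j < m) a j ^+ 2.
  by rewrite -sumrN; apply: eq_bigr => j _; rewrite /a; ring.
rewrite oppr_ge0 => SA_le0.
have SA0 : \sum_(j < m) a j ^+ 2 = 0.
  by apply/eqP; rewrite eq_le SA_le0 sumr_ge0 // => k _; exact: sqr_ge0.
have q_mu : q = mu.
  apply/rowP => j; apply/eqP; rewrite -subr_eq0 -sqrf_eq0; apply/eqP.
  exact: (psumr_eq0P (fun j _ => sqr_ge0 (a j)) SA0).
move: b0; rewrite /b q_mu /s opprB addrCA subrr addr0 max_l ?ltW // => eps0.
by move: eps_gt0; rewrite eps0 ltxx.
Qed.

Lemma epi_projection_affine_minorant : exists alpha c,
  (forall z, Xi z -> affineV alpha c z <= G z) /\ G mu - eps <= affineV alpha c mu.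
Proof.
have b_gt0 := epi_projection_height_gt0; have b_neq0 := lt0r_neq0 b_gt0.
pose c : 'rV[R]_m := \row_j (- a j / b).
pose alpha := tau + (\sum_(j < m) a j * q ord0 j) / b.
pose D (z : 'rV[R]_m) := \sum_(j < m) a j * (z ord0 j - q ord0 j).
have affine_eq z : affineV alpha c z = tau - D z / b.
  have D_eq : D z = \sum_(j < m) a j * z ord0 j - \sum_(j < m) a j * q ord0 j.
    by rewrite -sumrB; apply: eq_bigr => j _; ring.
  have c_eq : \sum_(j < m) c ord0 j * z ord0 j = - (\sum_(j < m) a j * z ord0 j) / b.
    by rewrite mulNr mulr_suml -sumrN; apply: eq_bigr => j _; rewrite mxE; ring.
  by rewrite /affineV c_eq D_eq /alpha; field.
exists alpha, c; split => [z Xiz|].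
  rewrite -subr_ge0 affine_eq.
  have -> : G z - (tau - D z / b) = (D z + b * (G z - tau)) / b by field.
  by rewrite divr_ge0 ?epi_projection_normal // ltW.
have D_mu : D mu = - \sum_(j < m) a j ^+ 2.
  by rewrite -sumrN; apply: eq_bigr => j _; rewrite /a; ring.
rewrite affine_eq D_mu mulNr opprK /tau -addrA lerDl addr_ge0 // divr_ge0 ?(ltW b_gt0) //.
by apply: sumr_ge0 => j _; exact: sqr_ge0.
Qed.

End Projection.

Lemma affine_minorant : exists alpha c,
  (forall z, Xi z -> affineV alpha c z <= G z) /\ G mu - eps <= affineV alpha c mu.
Proof.
have [q Xiq q_min] := epi_sqdist_has_min.
exact: epi_projection_affine_minorant Xiq q_min.
Qed.

End AffineMinorant.

Section Jensen.
Variables (R : realType) (m : nat) (Q : probability (BorelV R m) R).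
Variables (Xi : set 'rV[R]_m) (mu : 'rV[R]_m) (G : 'rV[R]_m -> R).
Hypothesis Xi_closed : closed Xi.
Hypothesis Q_Xi : Q (Xi : set (BorelV R m)) = 1%E.
Hypothesis Q_mean : has_mean Q mu.
Hypothesis G_bounded : exists M, forall z, Xi z -> `|G z| <= M.
Hypothesis G_cont : {within Xi, continuous G}.

Lemma Rintegral_ge_affine_minorant alpha c :
  (forall z, Xi z -> affineV alpha c z <= G z) ->
  affineV alpha c mu <= \int[Q]_(z in Xi) G z.
Proof.
move=> minor; have mXi := measurable_BorelV_closed Xi_closed.
have G_int : Q.-integrable Xi (EFin \o G).
  have [M hM] := G_bounded.
  apply: measurable_bounded_integrable => //.
  - exact: le_lt_trans (probability_le1 Q mXi) (ltry _).
  - exact: measurable_fun_BorelV_continuous.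
  - exists M; split; first exact: num_real.
    by move=> M' MM' z Xiz; apply: le_trans (hM z Xiz) (ltW MM').
have c_int := integrable_affineV Q_mean alpha c.
rewrite -(Rintegral_affineV Q_mean alpha c).
rewrite (Rintegral_full_measure mXi Q_Xi c_int).
by apply: le_Rintegral => //; exact: integrableS c_int.
Qed.

Theorem jensen_convex : convex_setV Xi -> convex_fun_on Xi G -> Xi mu ->
  G mu <= \int[Q]_(z in Xi) G z.
Proof.
move=> Xi_convex G_convex Ximu; apply/ler_addgt0Pr => e e_gt0.
have [alpha [c [minor near_mu]]] :=
  affine_minorant Xi_closed Xi_convex G_convex G_cont Ximu e_gt0.
have := Rintegral_ge_affine_minorant minor; lra.
Qed.

End Jensen.

Section MPC_DOO.
Variables (R : realType) (n m : nat) (X : set 'rV[R]_n) (Xi : set 'rV[R]_m).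
Variables (phi : 'rV[R]_n -> 'rV[R]_n -> 'rV[R]_m -> R) (beta : R).
Variables (Y : 'rV[R]_n -> 'rV[R]_m -> set 'rV[R]_n) (mu : 'rV[R]_m).
Variable P : set (probability (BorelV R m) R).
Hypothesis Xi_closed : closed Xi.
Hypothesis Xi_convex : convex_setV Xi.
Hypothesis Ximu : Xi mu.
Hypothesis Y_sub : forall x xi, X x -> Xi xi -> Y x xi `<=` X.
Hypothesis P_supp : forall Q, P Q -> Q (Xi : set (BorelV R m)) = 1%E.
Hypothesis P_mean : forall Q, P Q -> has_mean Q mu.
Hypothesis P_dirac : exists Q, P Q /\ forall A : set (BorelV R m), measurable A ->
  Q A = \d_(mu : BorelV R m) A.

Lemma inf_Rintegral_convex (f : 'rV[R]_m -> R) :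
  (exists M, forall z, Xi z -> `|f z| <= M) -> {within Xi, continuous f} ->
  convex_fun_on Xi f -> inf [set Rintegral Q Xi f | Q in P] = f mu.
Proof.
move=> f_bounded f_cont f_convex; have [Q0 [PQ0 Q0_dirac]] := P_dirac.
rewrite -(Rintegral_dirac_continuous Xi_closed Ximu Q0_dirac f_cont).
apply: inf_image_attained PQ0 _ => Q PQ.
rewrite (Rintegral_dirac_continuous Xi_closed Ximu Q0_dirac f_cont).
exact: jensen_convex (P_supp PQ) (P_mean PQ) f_bounded f_cont Xi_convex f_convex Ximu.
Qed.

Lemma MPC_solution_DOO_solution v : bcont_on X Xi v ->
  (forall x, X x -> convex_fun_on Xi (v x)) ->
  MPC_solution X Xi phi beta Y mu v -> DOO_solution X Xi phi beta Y P v.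
Proof.
move=> [[M vM] v_cont] v_convex v_MPC x xi Xx Xxi.
rewrite v_MPC //; congr (inf _); apply: eq_imagel => y /(Y_sub Xx Xxi) Xy.
rewrite inf_Rintegral_convex //; last exact: v_convex.
  by exists M => z Xiz; exact: vM.
exact: continuous_within_slice v_cont.
Qed.

End MPC_DOO.

Theorem corollary1 (R : realType) (n m : nat)
  (X : set 'rV[R]_n) (Xi : set 'rV[R]_m)
  (hXc : closed X) (hXcv : convex_setV X)
  (hXic : closed Xi) (hXicv : convex_setV Xi)
  (beta : R) (hbeta : 0 < beta < 1)
  (phi : 'rV[R]_n -> 'rV[R]_n -> 'rV[R]_m -> R)
  (hphib : exists M : R, forall x y xi, X x -> X y -> Xi xi -> `|phi x y xi| <= M)
  (hphic : {within [set p : ('rV[R]_n * 'rV[R]_n) * 'rV[R]_m |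
                      X p.1.1 /\ X p.1.2 /\ Xi p.2],
            continuous (fun p : ('rV[R]_n * 'rV[R]_n) * 'rV[R]_m =>
                          phi p.1.1 p.1.2 p.2)})
  (Y : 'rV[R]_n -> 'rV[R]_m -> set 'rV[R]_n)
  (hYsub : forall x xi, X x -> Xi xi -> Y x xi `<=` X)
  (hYne : forall x xi, X x -> Xi xi -> Y x xi !=set0)
  (hYcpt : forall x xi, X x -> Xi xi -> compact (Y x xi))
  (hYuhc : forall x xi, X x -> Xi xi -> forall U : set 'rV[R]_n,
      open U -> Y x xi `<=` U ->
      \forall p \near (x, xi), X p.1 -> Xi p.2 -> Y p.1 p.2 `<=` U)
  (hYlhc : forall x xi, X x -> Xi xi -> forall U : set 'rV[R]_n,
      open U -> Y x xi `&` U !=set0 ->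
      \forall p \near (x, xi), X p.1 -> Xi p.2 -> Y p.1 p.2 `&` U !=set0)
  (N : nat) (hN : (0 < N)%N) (xs : 'I_N -> 'rV[R]_m)
  (hxs : forall i, Xi (xs i))
  (P : set (probability (BorelV R m) R))
  (hPsupp : forall Q, P Q -> Q (Xi : set (BorelV R m)) = 1%E)
  (hPmean : forall Q, P Q -> forall j : 'I_m,
      Q.-integrable setT (fun z : BorelV R m => (z ord0 j)%:E) /\
      Rintegral Q setT (fun z : BorelV R m => z ord0 j)
        = ((N%:R)^-1 *: \sum_(i < N) xs i) ord0 j)
  (hPdirac : exists Q, P Q /\ forall A : set (BorelV R m), measurable A ->
      Q A = \d_((N%:R)^-1 *: \sum_(i < N) xs i : BorelV R m) A)
  (hconv : convexity_preserving X Xi phi beta Y ((N%:R)^-1 *: \sum_(i < N) xs i)) :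
  exists v : 'rV[R]_n -> 'rV[R]_m -> R,
    bcont_on X Xi v /\
    DOO_solution X Xi phi beta Y P v /\
    MPC_solution X Xi phi beta Y ((N%:R)^-1 *: \sum_(i < N) xs i) v /\
    (forall w, bcont_on X Xi w ->
       MPC_solution X Xi phi beta Y ((N%:R)^-1 *: \sum_(i < N) xs i) w ->
       forall x xi, X x -> Xi xi -> w x xi = v x xi).
Proof.
have /andP[beta_gt0 beta_lt1] := hbeta.
have [Q0 [PQ0 Q0_dirac]] := hPdirac.
have Ximu := dirac_support hXic (hPsupp Q0 PQ0) Q0_dirac.
have [F [[f0 Ff0] [F_bcont [F_closed [F_convex F_stable]]]]] := hconv.
have [v [Fv v_MPC]] := MPC_solution_exists_in Ximu (ltW beta_gt0) hphib hYsub hYne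
  beta_lt1 F_bcont F_closed F_stable Ff0.
have v_bcont := F_bcont v Fv.
exists v; split => //; split.
  apply: (MPC_solution_DOO_solution hXic hXicv Ximu hYsub hPsupp hPmean hPdirac
    v_bcont _ v_MPC).
  by move=> x Xx; exact: F_convex.
split => // w w_bcont w_MPC.
exact: (MPC_solution_unique Ximu (ltW beta_gt0) hphib hYsub hYne beta_lt1
  w_bcont v_bcont w_MPC v_MPC).
Qed.
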